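(* Let $k_1,k_2\ge2$ with $k_1+k_2$ even, and let $a=(u_1,u_2)$ be a CLT pair where $u_1,u_2$ are closed words with first letter $1$, without self edges, of lengths $k_1$ and $k_2$. Then either $\mathrm{wt}(a)=1+\#E_a$ or $\mathrm{wt}(a)=\#E_a$. Moreover: (i) if $\mathrm{wt}(a)=1+\#E_a$, then the graph $G_a$ is a tree, $N_e^{u_i}=2$ for all $e\in E_{u_i}$ ($i=1,2$), and $N_e^a=2$ for all $e\in E_a$ except exactly one edge $e_0$, for which $N_{e_0}^a=4$; (ii) if $\mathrm{wt}(a)=\#E_a$, then for each $i=1,2$ there is an edge $e\in E_a$ with $N_e^{u_i}=1$, and $N_e^a=2$ for all $e\in E_a$.
   Context: A word is a finite sequence $w=(s_1,\dots,s_m)$ of positive integers; $\ell(w)=m$; closed means $s_1=s_m$. $\mathrm{supp}(w)$ is its set of letters. Its graph $G_w$ has vertices $\mathrm{supp}(w)$ and undirected edges $E_w=\{\{s_i,s_{i+1}\}:1\le i\le m-1\}$; a self edge is one of form $\{u,u\}$. $N_e^w=\#\{i\le m-1:\{s_i,s_{i+1}\}=e\}$. For $a=(w_1,w_2)$: $\mathrm{wt}(a)=\#(\mathrm{supp}(w_1)\cup\mathrm{supp}(w_2))$, $G_a$ has vertices $\mathrm{supp}(w_1)\cup\mathrm{supp}(w_2)$ and edges $E_a=E_{w_1}\cup E_{w_2}$, $N_e^a=N_e^{w_1}+N_e^{w_2}$. $(w_1,w_2)$ is a CLT pair if $N_e^a\ge2$ for all $e\in E_a$, $E_{w_1}\cap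 E_{w_2}\neq\emptyset$, and $\mathrm{wt}(a)=\frac{\ell(w_1)+\ell(w_2)}{2}-1$. *)

From mathcomp Require Import all_boot.
Set Implicit Arguments. Unset Strict Implicit. Unset Printing Implicit Defensive.

Definition positive_word (w : seq nat) : bool := all (fun x => 0 < x) w.

Definition closed_word (w : seq nat) : bool :=
  (0 < size w) && (head 0 w == last 0 w).

(* undirected edge {u,v} represented canonically as (min, max) *)
Definition mkedge (u v : nat) : nat * nat := (minn u v, maxn u v).

Definition steps (w : seq nat) : seq (nat * nat) := zip w (behead w).

Definition edge_list (w : seq nat) : seq (nat * nat) :=
  [seq mkedge p.1 p.2 | p <- steps w].

Definition no_self_edge (w : seq nat) : bool := all (fun p => p.1 != p.2) (steps w).

Definition E (w : seq nat) : seq (nat * nat) := undup (edge_list w).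
Definition N (w : seq nat) (e : nat * nat) : nat := count_mem e (edge_list w).

Definition Va (w1 w2 : seq nat) : seq nat := undup (w1 ++ w2).
Definition wt (w1 w2 : seq nat) : nat := size (Va w1 w2).
Definition Ea (w1 w2 : seq nat) : seq (nat * nat) := undup (E w1 ++ E w2).
Definition Na (w1 w2 : seq nat) (e : nat * nat) : nat := N w1 e + N w2 e.

(* CLT pair; wt = (l1+l2)/2 - 1 written without division as 2*(wt+1) = l1+l2 *)
Definition CLT_pair (w1 w2 : seq nat) : Prop :=
  (forall e, e \in Ea w1 w2 -> 2 <= Na w1 w2 e) /\
  (exists e, e \in E w1 /\ e \in E w2) /\
  2 * (wt w1 w2 + 1) = size w1 + size w2.

Definition adj (w1 w2 : seq nat) : rel nat :=
  fun u v => mkedge u v \in Ea w1 w2.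

Definition connected_Ga (w1 w2 : seq nat) : Prop :=
  forall x y, x \in Va w1 w2 -> y \in Va w1 w2 ->
    exists p : seq nat, path (adj w1 w2) x p /\ last x p = y.

Definition acyclic_Ga (w1 w2 : seq nat) : Prop :=
  (forall u, mkedge u u \notin Ea w1 w2) /\
  ~ (exists c : seq nat, 3 <= size c /\ uniq c /\ cycle (adj w1 w2) c).

Definition is_tree_Ga (w1 w2 : seq nat) : Prop :=
  connected_Ga w1 w2 /\ acyclic_Ga w1 w2.

(* Gluing u1 and u2 at their common first letter gives a single closed walk through
   every vertex and edge of G_a.  A walk visits at most one more vertex than it has
   edges, and strictly fewer as soon as its graph contains a cycle; so
   wt <= 1 + #E_a, with equality only for a tree.  Counting steps,
   2 wt = l1 + l2 - 2 = sum_e N_e^a >= 2 #E_a.  If wt = #E_a every N_e^a is 2, so the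
   common edge is traversed once by each word.  If wt = 1 + #E_a, G_a is a tree:
   every edge is a bridge, so each closed walk crosses it an even number of times.
   The common edge then has N^a >= 4, and since the total excess over 2 is 2, it is
   the only edge with N^a > 2. *)

From mathcomp Require Import all_boot zify.
From Stdlib Require Import ClassicalEpsilon.

Set Implicit Arguments. Unset Strict Implicit. Unset Printing Implicit Defensive.

Lemma size_undup_eq (T : eqType) (s1 s2 : seq T) :
  s1 =i s2 -> size (undup s1) = size (undup s2).
Proof. by move=> eq_s12; apply/perm_size/perm_undup. Qed.

Lemma size_undup_cons (T : eqType) (x : T) s :
  size (undup (x :: s)) = size (undup s) + (x \notin s).
Proof. by rewrite /=; case: (x \in s); rewrite ?addn0 ?addn1. Qed.

Lemma mkedgeC a b : mkedge a b = mkedge b a.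
Proof. by rewrite /mkedge minnC maxnC. Qed.

Lemma mkedge_ends a b : mkedge a b = (a, b) \/ mkedge a b = (b, a).
Proof. by rewrite /mkedge; case: (leqP a b) => h; [left | right]; congr pair; lia. Qed.

Lemma mkedge_inj a b c d :
  mkedge a b = mkedge c d -> (a = c /\ b = d) \/ (a = d /\ b = c).
Proof. by rewrite /mkedge => -[]; lia. Qed.

Definition edges_within (V : seq nat) (F : seq (nat * nat)) : Prop :=
  forall e, e \in F -> e.1 \in V /\ e.2 \in V.

Lemma mkedge_within V F a b :
  edges_within V F -> mkedge a b \in F -> a \in V /\ b \in V.
Proof. by move=> VF /VF; case: (mkedge_ends a b) => -> /= [] *. Qed.

Lemma edge_list_cons2 x y s :
  edge_list (x :: y :: s) = mkedge x y :: edge_list (y :: s).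
Proof. by []. Qed.

Lemma edge_list_cat x s t :
  edge_list (x :: s ++ t) = edge_list (x :: s) ++ edge_list (last x s :: t).
Proof. by elim: s x => [|y s IH] x //=; rewrite edge_list_cons2 IH. Qed.

Lemma edge_list_splice p v q :
  edge_list (p ++ v :: q) = edge_list (rcons p v) ++ edge_list (v :: q).
Proof.
case: p => [|a p] //.
by rewrite -cat_rcons cat_cons edge_list_cat last_rcons.
Qed.

Lemma edge_list_rcons s y x :
  edge_list (rcons (rcons s y) x) = rcons (edge_list (rcons s y)) (mkedge y x).
Proof.
case: s => [|z s] //.
by rewrite rcons_cons -cats1 edge_list_cat last_rcons cats1.
Qed.

Lemma edge_list_rev s : edge_list (rev s) = rev (edge_list s).
Proof.
elim: s => [|x [|y s] IH] //.
by rewrite edge_list_cons2 [in RHS]rev_cons -IH !rev_cons edge_list_rcons mkedgeC.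
Qed.

Lemma edges_within_edge_list s : edges_within s (edge_list s).
Proof.
elim: s => [|x [|y s] IH] // e; rewrite edge_list_cons2 inE => /orP[/eqP->|/IH].
  by case: (mkedge_ends x y) => -> /=; rewrite !inE !eqxx ?orbT.
by rewrite !(in_cons x) => -[-> ->]; rewrite !orbT.
Qed.

Lemma size_edge_list s : size (edge_list s) = (size s).-1.
Proof. by rewrite size_map size_zip size_behead; lia. Qed.

(* Each step either reaches a vertex already in V or traverses an edge not yet in F. *)
Lemma walk_growth x t V F : x \in V -> edges_within V F ->
  size (undup (V ++ t)) + size (undup F) <=
  size (undup (F ++ edge_list (x :: t))) + size (undup V).
Proof.
elim: t x V F => [|y t IH] x V F xV VF; first by rewrite !cats0 addnC.
have yVF : edges_within (y :: V) (mkedge x y :: F).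
  move=> e; rewrite !inE => /orP[/eqP->|/VF[-> ->]]; last by rewrite !orbT.
  by case: (mkedge_ends x y) => -> /=; rewrite xV eqxx !orbT.
have := IH y _ _ (mem_head y V) yVF.
have -> : size (undup ((y :: V) ++ t)) = size (undup (V ++ y :: t)).
  by apply: size_undup_eq => z; rewrite !(mem_cat, inE) -orbA orbCA.
have -> : size (undup ((mkedge x y :: F) ++ edge_list (y :: t))) =
          size (undup (F ++ edge_list (x :: y :: t))).
  by apply: size_undup_eq => z; rewrite edge_list_cons2 !(mem_cat, inE) -orbA orbCA.
have new_vertex : (y \notin V) <= (mkedge x y \notin F).
  by case: (boolP (mkedge x y \in F)) => [/(mkedge_within VF)[_ ->]|_]; rewrite ?leq_b1.
move: new_vertex; rewrite !size_undup_cons.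
by case: (y \in V); case: (mkedge x y \in F) => /=; lia.
Qed.

Lemma walk_through_growth W v V F : v \in V -> v \in W -> edges_within V F ->
  size (undup (V ++ W)) + size (undup F) <=
  size (undup (F ++ edge_list W)) + size (undup V).
Proof.
move=> vV /splitPr[p q] VF.
(* Extend by the walk v :: q, then by the reversed walk v :: rev p. *)
have grow_q := walk_growth q vV VF.
have vVq : v \in V ++ v :: q by rewrite mem_cat vV.
have VqFq : edges_within (V ++ v :: q) (F ++ edge_list (v :: q)).
  move=> e; rewrite !mem_cat => /orP[/VF[-> ->]|/edges_within_edge_list[-> ->]];
  by rewrite ?orbT.
have := walk_growth (rev p) vVq VqFq.
have -> : size (undup (V ++ v :: q)) = size (undup (V ++ q)).
  by apply: size_undup_eq => z; rewrite !(mem_cat, inE); case: (z =P v) => [->|_]; rewrite ?vV.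
have -> : size (undup ((V ++ v :: q) ++ rev p)) = size (undup (V ++ p ++ v :: q)).
  apply: size_undup_eq => z; rewrite !(mem_cat, inE) mem_rev.
  by rewrite orbC orbCA orbA.
have -> : size (undup ((F ++ edge_list (v :: q)) ++ edge_list (v :: rev p))) =
          size (undup (F ++ edge_list (p ++ v :: q))).
  apply: size_undup_eq => z.
  rewrite -rev_rcons edge_list_rev edge_list_splice !mem_cat mem_rev.
  by rewrite -orbA [X in _ || X]orbC.
lia.
Qed.

Lemma walk_vertex_bound x t :
  size (undup (x :: t)) <= (size (undup (edge_list (x :: t)))).+1.
Proof.
have := @walk_growth x t [:: x] [::] (mem_head x [::]).
by rewrite /= addn0 addn1; apply=> e; rewrite in_nil.
Qed.

Lemma walk_excess_of_subgraph W V F v :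
  v \in V -> {subset V <= W} -> {subset F <= edge_list W} -> edges_within V F ->
  size (undup V) <= size (undup F) ->
  size (undup W) <= size (undup (edge_list W)).
Proof.
move=> vV VW FW VF VleF; have := walk_through_growth vV (VW v vV) VF.
have -> : size (undup (V ++ W)) = size (undup W).
  by apply: size_undup_eq => z; rewrite mem_cat orb_idl // => /VW.
have -> : size (undup (F ++ edge_list W)) = size (undup (edge_list W)).
  by apply: size_undup_eq => z; rewrite mem_cat orb_idl // => /FW.
lia.
Qed.

Lemma walk_excess_of_cycle W x p :
  {subset x :: p <= W} -> {subset edge_list (x :: p) <= edge_list W} ->
  mkedge x (last x p) \in edge_list W -> mkedge x (last x p) \notin edge_list (x :: p) ->
  size (undup W) <= size (undup (edge_list W)).
Proof.
move=> pW pEW chordW fresh.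
apply: (@walk_excess_of_subgraph W (x :: p) (mkedge x (last x p) :: edge_list (x :: p)) x).
- exact: mem_head.
- exact: pW.
- by move=> e; rewrite inE => /orP[/eqP->|/pEW].
- move=> e; rewrite inE => /orP[/eqP->|/edges_within_edge_list//].
  by case: (mkedge_ends x (last x p)) => ->; split; first [exact: mem_head | exact: mem_last].
- by rewrite [X in _ <= X]size_undup_cons fresh addn1 walk_vertex_bound.
Qed.

Definition reachable (r : rel nat) (a b : nat) : Prop :=
  exists p, path r a p /\ last a p = b.

Lemma reachable_step r a b c : reachable r a b -> r b c -> reachable r a c.
Proof. by case=> p [ap <-] rbc; exists (rcons p c); rewrite rcons_path ap rbc last_rcons. Qed.

Lemma reachable_sym r a b : symmetric r -> reachable r a b -> reachable r b a.
Proof.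
move=> r_sym [p [ap <-]]; exists (rev (belast a p)); split.
  by rewrite rev_path; apply: sub_path ap => u v; rewrite r_sym.
by case/lastP: p {ap} => [|p c] //; rewrite belast_rcons rev_cons last_rcons.
Qed.

Lemma reachable_trans r a b c :
  reachable r a b -> reachable r b c -> reachable r a c.
Proof.
case=> p [ap <-] [q [bq <-]].
by exists (p ++ q); rewrite cat_path ap bq last_cat.
Qed.

Lemma path_reachable r x t b : path r x t -> b \in x :: t -> reachable r x b.
Proof.
rewrite inE => xt /orP[/eqP->|bt]; first by exists [::].
move: xt; case/splitPr: bt => t1 t2; rewrite cat_path => /andP[xt1 /andP[rb _]].
by apply: reachable_step rb; exists t1.
Qed.

Lemma odd_count_flips (s : pred nat) x p :
  odd (count (fun q => s q.1 != s q.2) (steps (x :: p))) = (s x != s (last x p)).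
Proof.
elim: p x => [|y p IH] x; first by rewrite eqxx.
rewrite -[steps _]/((x, y) :: steps (y :: p)) /= oddD IH /=.
by case: (s x); case: (s y); case: (s (last y p)).
Qed.

Lemma even_count_bridge (F : seq (nat * nat)) a b x p :
  ~ reachable (fun u v => (mkedge u v \in F) && (mkedge u v != mkedge a b)) a b ->
  {subset edge_list (x :: p) <= F} -> last x p = x ->
  ~~ odd (count_mem (mkedge a b) (edge_list (x :: p))).
Proof.
move=> cut pF closed.
pose r u v := (mkedge u v \in F) && (mkedge u v != mkedge a b).
(* s z tells on which side of the cut at [mkedge a b] the vertex z lies. *)
pose s z := if excluded_middle_informative (reachable r a z) then true else false.
have sP z : reflect (reachable r a z) (s z).
  by rewrite /s; case: excluded_middle_informative => h; constructor.
have ra : reachable r a a by exists [::].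
have flip q : q \in steps (x :: p) -> (s q.1 != s q.2) = (mkedge q.1 q.2 == mkedge a b).
  move=> qin; have qF : mkedge q.1 q.2 \in F by apply/pF/map_f.
  case: (mkedge q.1 q.2 =P mkedge a b) => [/mkedge_inj[[-> ->]|[-> ->]]|/eqP ne].
  - by case: (sP a) => [_|/(_ ra)[]]; case: (sP b) => [/cut[]|].
  - by case: (sP a) => [_|/(_ ra)[]]; case: (sP b) => [/cut[]|].
  have [rq rq'] : r q.1 q.2 /\ r q.2 q.1 by rewrite /r [mkedge q.2 q.1]mkedgeC qF ne.
  apply/negbTE; rewrite negbK; apply/eqP.
  case: (sP q.1) => [h1|h1]; case: (sP q.2) => [h2|h2] //.
    by case: h2; apply: reachable_step h1 rq.
  by case: h1; apply: reachable_step h2 rq'.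
rewrite count_map -(eq_in_count flip) odd_count_flips closed.
by rewrite eqxx.
Qed.

Lemma sum_count_mem (T : eqType) (r l : seq T) : uniq r -> {subset l <= r} ->
  \sum_(e <- r) count_mem e l = size l.
Proof.
move=> r_uniq; elim: l => [|x l IH] lr; first by rewrite big1_seq.
rewrite big_split /= IH => [|z zl]; last by apply: lr; rewrite inE zl orbT.
have -> : \sum_(i <- r) (x == i) = count_mem x r.
  rewrite -sum1_count [RHS]big_mkcond; apply: eq_bigr => i _.
  by rewrite /= eq_sym; case: (i == x).
by rewrite count_uniq_mem // lr ?mem_head.
Qed.

Lemma sum_ge2 (T : eqType) (r : seq T) f :
  {in r, forall e, 2 <= f e} -> 2 * size r <= \sum_(e <- r) f e.
Proof.
elim: r => [|x r IH] f2; first by rewrite big_nil.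
rewrite big_cons /= mulnS leq_add ?f2 ?mem_head // IH // => e er.
by rewrite f2 // inE er orbT.
Qed.

Lemma sum_eq2 (T : eqType) (r : seq T) f :
  {in r, forall e, 2 <= f e} -> \sum_(e <- r) f e <= 2 * size r ->
  {in r, forall e, f e = 2}.
Proof.
elim: r => [|x r IH] f2 //; rewrite big_cons /= mulnS => sum_le e.
have f2r : {in r, forall e, 2 <= f e} by move=> z zr; rewrite f2 // inE zr orbT.
have := sum_ge2 f2r; have := f2 x (mem_head x r).
rewrite inE => fx sum_r /orP[/eqP->|er]; first lia.
by apply: IH => //; lia.
Qed.

Lemma path_mkedge (P : pred (nat * nat)) x p :
  path (fun u v => P (mkedge u v)) x p = all P (edge_list (x :: p)).
Proof. by elim: p x => [|y p IH] x //=; rewrite IH. Qed.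

Lemma walk_vertices_within V F x p : edges_within V F -> x \in V ->
  {subset edge_list (x :: p) <= F} -> {subset x :: p <= V}.
Proof.
move=> VF; elim: p x => [|y p IH] x xV pF z; rewrite in_cons => /orP[/eqP->//|] //.
have [_ yV] := mkedge_within VF (pF _ (mem_head _ _)).
by apply: IH => // e ep; apply: pF; rewrite edge_list_cons2 inE ep orbT.
Qed.

Lemma uniq_path_chord x p : uniq (x :: p) -> 1 < size p ->
  mkedge x (last x p) \notin edge_list (x :: p).
Proof.
case: p => [|y [|z p]] // /andP[]; rewrite inE negb_or => /andP[xy xzp] /andP[yzp _] _.
rewrite edge_list_cons2 inE negb_or; apply/andP; split.
  apply/eqP => /mkedge_inj[[_ ly]|[xy' _]]; last by rewrite xy' eqxx in xy.
  by move: yzp; rewrite -ly /= mem_last.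
have within := @edges_within_edge_list [:: y, z & p].
apply/negP => /(mkedge_within within)[].
by rewrite inE (negbTE xy) (negbTE xzp).
Qed.

Lemma closed_word_head u x :
  closed_word u -> head 0 u = x -> exists2 t, u = x :: t & last x t = x.
Proof. by case: u => [|y t] // /andP[_ /eqP /= yt] <-; exists t. Qed.

Lemma mem_E u e : (e \in E u) = (e \in edge_list u).
Proof. exact: mem_undup. Qed.

Lemma N_gt0 u e : e \in E u -> 0 < N u e.
Proof. by rewrite mem_E -has_pred1 has_count. Qed.

Lemma mem_Ea u1 u2 e :
  (e \in Ea u1 u2) = (e \in edge_list u1) || (e \in edge_list u2).
Proof. by rewrite mem_undup mem_cat !mem_E. Qed.

Lemma sum_Na u1 u2 :
  \sum_(e <- Ea u1 u2) Na u1 u2 e = (size u1).-1 + (size u2).-1.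
Proof.
rewrite big_split /= !sum_count_mem ?undup_uniq ?size_edge_list // => e;
by rewrite mem_Ea => ->; rewrite ?orbT.
Qed.

Lemma no_self_edge_loop w u : no_self_edge w -> mkedge u u \notin edge_list w.
Proof.
move=> /allP loopfree; apply/mapP => -[q /loopfree q12 /mkedge_inj].
by case=> -[q1 q2]; move: q12; rewrite -q1 -q2 eqxx.
Qed.

Lemma even_ge2 n : 0 < n -> ~~ odd n -> 1 < n.
Proof. by case: n => [|[|n]]. Qed.

Lemma edge_list_sub_Ea1 u1 u2 : {subset edge_list u1 <= Ea u1 u2}.
Proof. by move=> e eu; rewrite mem_Ea eu. Qed.

Lemma edge_list_sub_Ea2 u1 u2 : {subset edge_list u2 <= Ea u1 u2}.
Proof. by move=> e eu; rewrite mem_Ea eu orbT. Qed.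

Section ClosedWalkPair.

Variables (x : nat) (t1 t2 : seq nat).
Hypothesis closed1 : last x t1 = x.

Local Notation u1 := (x :: t1).
Local Notation u2 := (x :: t2).
Local Notation walk := (x :: t1 ++ t2).

Lemma mem_Ea_walk : Ea u1 u2 =i edge_list walk.
Proof. by move=> e; rewrite mem_Ea edge_list_cat closed1 mem_cat. Qed.

Lemma mem_Va_walk : Va u1 u2 =i walk.
Proof.
move=> z; rewrite mem_undup !(mem_cat, inE).
by case: (z == x); rewrite ?orbT.
Qed.

Lemma wt_walk : wt u1 u2 = size (undup walk).
Proof. by apply: size_undup_eq => z; rewrite -mem_Va_walk mem_undup. Qed.

Lemma size_Ea_walk : size (Ea u1 u2) = size (undup (edge_list walk)).
Proof. by apply: size_undup_eq => e; rewrite -mem_Ea_walk mem_undup. Qed.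

Lemma Ea_within_Va : edges_within (Va u1 u2) (Ea u1 u2).
Proof.
by move=> e; rewrite mem_Ea_walk !mem_Va_walk; apply: edges_within_edge_list.
Qed.

Lemma wt_le_size_Ea : wt u1 u2 <= (size (Ea u1 u2)).+1.
Proof. by rewrite wt_walk size_Ea_walk walk_vertex_bound. Qed.

Lemma connected_walk : connected_Ga u1 u2.
Proof.
move=> a b; rewrite !mem_Va_walk => aW bW.
have adj_sym : symmetric (adj u1 u2) by move=> u v; rewrite /adj mkedgeC.
have walk_path : path (adj u1 u2) x (t1 ++ t2).
  by rewrite (path_mkedge (fun e => e \in Ea u1 u2)); apply/allP => e; rewrite mem_Ea_walk.
exact: reachable_trans (reachable_sym adj_sym (path_reachable walk_path aW))
                       (path_reachable walk_path bW).
Qed.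

Section Tree.

Hypothesis tree : wt u1 u2 = (size (Ea u1 u2)).+1.

Lemma chord_on_path y p :
  {subset edge_list (y :: p) <= Ea u1 u2} -> mkedge y (last y p) \in Ea u1 u2 ->
  mkedge y (last y p) \in edge_list (y :: p).
Proof.
move=> pE chord; apply/negPn/negP => fresh.
have [yV _] := mkedge_within Ea_within_Va chord.
have pV := walk_vertices_within Ea_within_Va yV pE.
have : size (undup walk) <= size (undup (edge_list walk)).
  apply: (walk_excess_of_cycle _ _ _ fresh) => [z /pV|e /pE|];
  by rewrite -?mem_Va_walk -?mem_Ea_walk.
by rewrite -wt_walk -size_Ea_walk tree ltnn.
Qed.

Lemma acyclic_walk : no_self_edge u1 -> no_self_edge u2 -> acyclic_Ga u1 u2.
Proof.
move=> loopfree1 loopfree2; split=> [u|].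
  by rewrite mem_Ea negb_or !no_self_edge_loop.
case=> -[|y [|z [|w c]]] [size_c [c_uniq c_cycle]] //.
set p := [:: z, w & c] in c_uniq c_cycle.
move: c_cycle; rewrite /cycle -cats1 (path_mkedge (fun e => e \in Ea u1 u2)).
rewrite edge_list_cat all_cat => /andP[/allP pE]; rewrite /= andbT mkedgeC => chord.
by move: (chord_on_path pE chord); rewrite (negbTE (uniq_path_chord c_uniq _)).
Qed.

Lemma N_even y t e : last y t = y -> {subset edge_list (y :: t) <= Ea u1 u2} ->
  e \in Ea u1 u2 -> ~~ odd (N (y :: t) e).
Proof.
move=> closed tE eE.
have /mapP[[a b] _ /= e_ab] : e \in edge_list walk by rewrite -mem_Ea_walk.
subst e; apply: (even_count_bridge _ tE closed) => -[p [ap pb]].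
move: ap; rewrite (path_mkedge (fun f => (f \in Ea u1 u2) && (f != mkedge a b))).
move=> /allP avoid.
have pE : {subset edge_list (a :: p) <= Ea u1 u2} by move=> f /avoid /andP[].
have := chord_on_path pE; rewrite pb => /(_ eE) /avoid.
by rewrite eqxx andbF.
Qed.

End Tree.

End ClosedWalkPair.

Section CLTCounting.

Variables (x : nat) (t1 t2 : seq nat).

Local Notation u1 := (x :: t1).
Local Notation u2 := (x :: t2).

Hypothesis Na_ge2 : {in Ea u1 u2, forall e, 2 <= Na u1 u2 e}.
Hypothesis size_pair : 2 * (wt u1 u2 + 1) = size u1 + size u2.

Lemma sum_Na_wt : \sum_(e <- Ea u1 u2) Na u1 u2 e = 2 * wt u1 u2.
Proof. by rewrite sum_Na /=; move: size_pair => /=; lia. Qed.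

Lemma size_Ea_le_wt : size (Ea u1 u2) <= wt u1 u2.
Proof. by have := sum_ge2 Na_ge2; rewrite sum_Na_wt leq_pmul2l. Qed.

Lemma Na_eq2 : wt u1 u2 = size (Ea u1 u2) -> {in Ea u1 u2, forall e, Na u1 u2 e = 2}.
Proof. by move=> wt_Ea; apply: sum_eq2 Na_ge2 _; rewrite sum_Na_wt wt_Ea. Qed.

Variable ec : nat * nat.
Hypotheses (ec_u1 : ec \in E u1) (ec_u2 : ec \in E u2).

Lemma ec_in_Ea : ec \in Ea u1 u2.
Proof. by apply: edge_list_sub_Ea1; rewrite -mem_E. Qed.

Lemma N_common_eq1 : wt u1 u2 = size (Ea u1 u2) -> N u1 ec = 1 /\ N u2 ec = 1.
Proof.
move=> /Na_eq2 /(_ ec ec_in_Ea); rewrite /Na.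
by have := N_gt0 ec_u1; have := N_gt0 ec_u2; lia.
Qed.

Section TreeCount.

Hypotheses (closed1 : last x t1 = x) (closed2 : last x t2 = x).
Hypothesis tree : wt u1 u2 = (size (Ea u1 u2)).+1.

Lemma N_common_ge2 : 2 <= N u1 ec /\ 2 <= N u2 ec.
Proof.
split; apply: even_ge2; rewrite ?N_gt0 //.
  by apply: (N_even closed1 tree closed1 _ ec_in_Ea); apply: edge_list_sub_Ea1.
by apply: (N_even closed1 tree closed2 _ ec_in_Ea); apply: edge_list_sub_Ea2.
Qed.

Lemma Na_excess :
  Na u1 u2 ec = 4 /\ {in Ea u1 u2, forall e, e != ec -> Na u1 u2 e = 2}.
Proof.
have [ge2_1 ge2_2] := N_common_ge2.
have rem_ge2 : {in rem ec (Ea u1 u2), forall e, 2 <= Na u1 u2 e}.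
  by move=> e /mem_rem; apply: Na_ge2.
have Ea_gt0 : 0 < size (Ea u1 u2) by case: (Ea u1 u2) ec_in_Ea.
have size_rem_Ea : size (rem ec (Ea u1 u2)) = size (Ea u1 u2) - 1.
  by rewrite subn1 size_rem // ec_in_Ea.
have sum_rem : 2 * size (rem ec (Ea u1 u2)) <= \sum_(e <- rem ec (Ea u1 u2)) Na u1 u2 e.
  exact: sum_ge2.
have sum_eq : Na u1 u2 ec + \sum_(e <- rem ec (Ea u1 u2)) Na u1 u2 e =
              2 * (size (Ea u1 u2)).+1.
  by rewrite -tree -sum_Na_wt (big_rem ec ec_in_Ea).
have Na_ge4 : 4 <= Na u1 u2 ec by rewrite /Na; lia.
have Na4 : Na u1 u2 ec = 4 by lia.
have sum_rem_le : \sum_(e <- rem ec (Ea u1 u2)) Na u1 u2 e <= 2 * size (rem ec (Ea u1 u2)).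
  by lia.
split=> // e e_in e_ne; apply: (sum_eq2 rem_ge2 sum_rem_le).
by rewrite mem_rem_uniq ?undup_uniq // inE e_ne.
Qed.

Lemma N_le2 e : e \in Ea u1 u2 -> N u1 e <= 2 /\ N u2 e <= 2.
Proof.
have [Na4 Na2] := Na_excess; have [ge2_1 ge2_2] := N_common_ge2.
case: (e =P ec) => [->|/eqP e_ne e_in]; first by move: Na4; rewrite /Na; lia.
by move: (Na2 e e_in e_ne); rewrite /Na; lia.
Qed.

Lemma N1_eq2 : {in E u1, forall e, N u1 e = 2}.
Proof.
move=> e e_u1; have e_in : e \in Ea u1 u2 by apply: edge_list_sub_Ea1; rewrite -mem_E.
have [le2 _] := N_le2 e_in; apply/eqP; rewrite eqn_leq le2 even_ge2 ?N_gt0 //.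
by apply: (N_even closed1 tree closed1 _ e_in); apply: edge_list_sub_Ea1.
Qed.

Lemma N2_eq2 : {in E u2, forall e, N u2 e = 2}.
Proof.
move=> e e_u2; have e_in : e \in Ea u1 u2 by apply: edge_list_sub_Ea2; rewrite -mem_E.
have [_ le2] := N_le2 e_in; apply/eqP; rewrite eqn_leq le2 even_ge2 ?N_gt0 //.
by apply: (N_even closed1 tree closed2 _ e_in); apply: edge_list_sub_Ea2.
Qed.

End TreeCount.

End CLTCounting.

Theorem mainTheorem3 (k1 k2 : nat) (u1 u2 : seq nat) :
  2 <= k1 -> 2 <= k2 -> ~~ odd (k1 + k2) ->
  positive_word u1 -> positive_word u2 ->
  size u1 = k1 -> size u2 = k2 ->
  closed_word u1 -> closed_word u2 ->
  head 0 u1 = 1 -> head 0 u2 = 1 ->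
  no_self_edge u1 -> no_self_edge u2 ->
  CLT_pair u1 u2 ->
  (wt u1 u2 = 1 + size (Ea u1 u2) \/ wt u1 u2 = size (Ea u1 u2)) /\
  (wt u1 u2 = 1 + size (Ea u1 u2) ->
     is_tree_Ga u1 u2 /\
     (forall e, e \in E u1 -> N u1 e = 2) /\
     (forall e, e \in E u2 -> N u2 e = 2) /\
     (exists e0, [/\ e0 \in Ea u1 u2, Na u1 u2 e0 = 4 &
        forall e, e \in Ea u1 u2 -> e != e0 -> Na u1 u2 e = 2])) /\
  (wt u1 u2 = size (Ea u1 u2) ->
     (exists e, e \in Ea u1 u2 /\ N u1 e = 1) /\
     (exists e, e \in Ea u1 u2 /\ N u2 e = 1) /\
     (forall e, e \in Ea u1 u2 -> Na u1 u2 e = 2)).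
Proof.
move=> _ _ _ _ _ _ _ closed_u1 closed_u2 head_u1 head_u2 loopfree1 loopfree2.
move=> [Na_ge2 [[ec [ec_u1 ec_u2]] size_pair]].
have [t1 u1E closed1] := closed_word_head closed_u1 head_u1.
have [t2 u2E closed2] := closed_word_head closed_u2 head_u2.
subst u1 u2.
have ec_in : ec \in Ea (1 :: t1) (1 :: t2) by apply: ec_in_Ea.
have le_Ea_wt := size_Ea_le_wt Na_ge2 size_pair.
have le_wt_Ea := wt_le_size_Ea t2 closed1.
split; first lia.
split=> [tree | wt_Ea].
  rewrite add1n in tree.
  have [Na4 Na2] := Na_excess Na_ge2 size_pair ec_u1 ec_u2 closed1 closed2 tree.
  split; first by split; [exact: connected_walk | exact: acyclic_walk].
  split; first exact: (N1_eq2 Na_ge2 size_pair ec_u1 ec_u2 closed1 closed2 tree).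
  split; first exact: (N2_eq2 Na_ge2 size_pair ec_u1 ec_u2 closed1 closed2 tree).
  by exists ec; split.
have [N1 N2] := N_common_eq1 Na_ge2 size_pair ec_u1 ec_u2 wt_Ea.
by split; [exists ec | split; [exists ec | exact: Na_eq2]].
Qed.
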